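(* Let $\lambda$ be a (straight or skew) shape with $n$ boxes and let $m\in\mathbb N=\{1,2,3,\dots\}$. Then there is a bijection $$T[\lambda,0,+]=T[\lambda,\boxtimes]\cup T[\lambda,\div,+]\cup T[\lambda,\cdot|\cdot,+]\;\longrightarrow\;T[\lambda,m,+]$$ and a bijection $$T[\lambda,0,-]=T[\lambda,\boxtimes]\cup T[\lambda,\div,-]\cup T[\lambda,\cdot|\cdot,-]\;\longrightarrow\;T[\lambda,m,-],$$ each sending a tableau $X$ to the unique tableau $Y$ whose positive-content part, as a filling of $\lambda$, equals the nonnegative half of $X$ as a filling of $\lambda$.
   Context: Boxes of a diagram are indexed by (row $i$, column $j$), rows numbered downward and columns rightward; the content of box $(i,j)$ is $j-i$. A D-Young tableau is a filling of a skew diagram by the $2n$ numbers $\pm1,\dots,\pm n$, each number in exactly one box and each box containing one number, except that a box of content $0$ may contain a pair $\pm i$; with $c_k$ the content of the box containing $k$, one requires $c_{-k}=-c_k$. It is standard if entries increase along rows (left to right) and down columns (a box containing $\pm i$, $i>0$, counts as $-i$ when compared with entries to its left or above and as $i$ when compared with entries to its right or below). A D-Young tableau with no box of content $0$ is regarded as determined by its positive-content part (entries and contents). Let $\lambda$ be a shape with $n$ boxes. For $m\in\mathbb N$, $T[\lambda,m,\pm]$ is the set of standard D-Young tableaux whose smallest nonnegative content is $m$, whose positive-content boxes form the shape $\lambda$, with an even ($+$) / odd ($-$) number of negative entries among the positive-content boxes. $T[\lambda,\boxtimes]$ is the set of standard D-Young tableaux having exactly one box of content $0$ (necessarily containing a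 pair $\pm i$) whose boxes of nonnegative content form the shape $\lambda$; its nonnegative half is the filling of $\lambda$ by these boxes, where the zero-content box is regarded as containing $i$ or $-i$, the sign chosen so that the number of negative entries is even (for the $+$ bijection) or odd (for the $-$ bijection). $T[\lambda,\cdot|\cdot,+]$ (resp. $T[\lambda,\div,+]$) is the set of standard D-Young tableaux with exactly two boxes of content $0$ which can be divided by a vertical (resp. horizontal) straight line into two parts of $n$ boxes each, one consisting of boxes of nonnegative content and the other of boxes of nonpositive content, such that the part of nonnegative content (its nonnegative half) has shape $\lambda$ and contains an even number of negative entries; with ''odd'' instead of ''even'' one gets $T[\lambda,\cdot|\cdot,-]$, $T[\lambda,\div,-]$. The sets $T[\lambda,0,\pm]$ are defined as the displayed unions. *)

(* boxes are pairs of integers (row, column). *)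
From Stdlib Require Import ZArith List Bool Lia.
Open Scope Z_scope.

Definition box := (Z * Z)%type.

Definition content (b : box) : Z := snd b - fst b.

Definition shift (b t : box) : box := (fst b + fst t, snd b + snd t).

Definition beq_box (a b : box) : bool :=
  Z.eqb (fst a) (fst b) && Z.eqb (snd a) (snd b).

Definition ents (n : nat) : list Z :=
  map Z.of_nat (seq 1 n) ++ map (fun i => - Z.of_nat i) (seq 1 n).

Definition entry (n : nat) (k : Z) : Prop := In k (ents n).

(* a filling of a diagram by +-1..+-n is given by the box [p k] containing k *)
Definition Tab := Z -> box.

Definition inD (n : nat) (p : Tab) (b : box) : Prop :=
  exists k, entry n k /\ p k = b.

(* skew diagram: a finite set of boxes which is convex for the product order
   (equivalently, a translate of a skew shape mu/nu) *)
Definition skew (D : box -> Prop) : Prop :=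
  forall a b c, D a -> D c ->
    fst a <= fst b <= fst c -> snd a <= snd b <= snd c -> D b.

Definition DYoung (n : nat) (p : Tab) : Prop :=
  (forall k l, entry n k -> entry n l -> k <> l -> p k = p l ->
     l = - k /\ content (p k) = 0) /\
  (forall k, entry n k -> content (p (- k)) = - content (p k)) /\
  skew (inD n p).

Definition paired (p : Tab) (k : Z) : bool := beq_box (p k) (p (- k)).

(* value of the box of k when compared with entries to its right or below *)
Definition lval (p : Tab) (k : Z) : Z := if paired p k then Z.abs k else k.
(* value of the box of k when compared with entries to its left or above *)
Definition rval (p : Tab) (k : Z) : Z := if paired p k then - Z.abs k else k.

Definition standard (n : nat) (p : Tab) : Prop :=
  forall k l, entry n k -> entry n l ->
    ((fst (p k) = fst (p l) /\ snd (p k) < snd (p l)) \/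
     (snd (p k) = snd (p l) /\ fst (p k) < fst (p l))) ->
    lval p k < rval p l.

Definition DStd (n : nat) (p : Tab) : Prop := DYoung n p /\ standard n p.

(* number of (distinct) boxes whose position satisfies P *)
Definition nboxes (n : nat) (p : Tab) (P : box -> bool) : nat :=
  length (filter (fun k => P (p k) && (negb (paired p k) || Z.ltb 0 k)) (ents n)).

Definition nneg (n : nat) (p : Tab) (P : box -> bool) : nat :=
  length (filter (fun k => Z.ltb k 0 && P (p k)) (ents n)).

Definition zerob (b : box) : bool := Z.eqb (content b) 0.
Definition posb (b : box) : bool := Z.ltb 0 (content b).

Definition minnonneg (n : nat) (p : Tab) (m : Z) : Prop :=
  (exists k, entry n k /\ content (p k) = m) /\
  (forall k, entry n k -> 0 <= content (p k) -> m <= content (p k)).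

(* [E b e] : box b of some part carries entry e.  [filling_of lam E F]: the
   boxes of the part form (a translate of) the shape lam, and, read as a
   filling of lam, the part is F. *)
Definition filling_of (lam : list box) (E : box -> Z -> Prop) (F : box -> Z)
  : Prop :=
  exists t : box,
    (forall b, (exists e, E b e) <-> exists b0, In b0 lam /\ b = shift b0 t) /\
    (forall b0, In b0 lam -> forall e, E (shift b0 t) e <-> e = F b0).

(* ---- T[lam, m, s] (m >= 1), s = true for '+', false for '-' ----
   [Rm lam m s q F]: q is in T[lam,m,s] and its positive-content part,
   as a filling of lam, is F. *)
Definition Rm (lam : list box) (m : Z) (s : bool) (q : Tab) (F : box -> Z)
  : Prop :=
  let n := length lam in
  DStd n q /\ minnonneg n q m /\
  filling_of lam (fun b e => entry n e /\ q e = b /\ 0 < content b) F /\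
  Nat.even (nneg n q posb) = s.

Definition Rbox (lam : list box) (s : bool) (p : Tab) (F : box -> Z) : Prop :=
  let n := length lam in
  DStd n p /\ nboxes n p zerob = 1%nat /\
  filling_of lam
    (fun b e => entry n e /\ p e = b /\ 0 <= content b /\
       (content b = 0 -> (0 < e <-> Nat.even (nneg n p posb) = s))) F.

(* ---- T[lam, div, s] (horiz = true) and T[lam, .|., s] (horiz = false):
   a horizontal (resp. vertical) line splits the boxes into the rows <= c0 /
   rows > c0 (resp. columns <= c0 / columns > c0); [side] selects which of
   the two parts is the nonnegative-content one. ---- *)
Definition Rsplit (horiz : bool) (lam : list box) (s : bool) (p : Tab)
  (F : box -> Z) : Prop :=
  let n := length lam in
  DStd n p /\ nboxes n p zerob = 2%nat /\
  exists (c0 : Z) (side : bool),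
    let P := fun b : box =>
      Bool.eqb (if horiz then Z.leb (fst b) c0 else Z.leb (snd b) c0) side in
    nboxes n p P = n /\ nboxes n p (fun b => negb (P b)) = n /\
    (forall k, entry n k -> P (p k) = true -> 0 <= content (p k)) /\
    (forall k, entry n k -> P (p k) = false -> content (p k) <= 0) /\
    filling_of lam (fun b e => entry n e /\ p e = b /\ P b = true) F /\
    Nat.even (nneg n p P) = s.

Definition R0 (lam : list box) (s : bool) (p : Tab) (F : box -> Z) : Prop :=
  Rbox lam s p F \/ Rsplit true lam s p F \/ Rsplit false lam s p F.

(* D-Young tableaux are identified when they have the same entries with the
   same contents *)
Definition same_tableau (n : nat) (p p' : Tab) : Prop :=
  forall k, entry n k -> content (p k) = content (p' k).

(* Both sides of the bijection are parametrised by half fillings: standard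
   fillings F of lam by entries of +-1, ..., +-n using exactly one of each pair
   +-k.  The nonnegative half of a tableau of T[lam,0,+-] is such an F, and the
   tableau determines it: entries of positive content belong to F, those of
   negative content do not, and of the pair of content 0 the parity of the
   number of negative entries selects one.  In turn F determines the contents
   of the tableau, since c(-k) = -c(k) and the smallest nonnegative content is
   0.  The positive part of a tableau of T[lam,m,+-] is a half filling too.

   Conversely, every half filling with the right parity arises on both sides:
   put F on a translate of lam and -F on the point reflection of that
   translate.  For T[lam,m,+-], translate so that the least content is m and
   reflect through a point just below the diagonal.  For T[lam,0,+-],
   translate so that the box of least content, holding x, lies on the
   diagonal.  Reflecting through the centre of that box gives a tableau of
   T[lam,boxtimes], which is standard when the neighbour of x to the right
   exceeds |x| and the one above is less than -|x|.  If the right neighbour is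
   smaller, reflecting through the lower right corner of the box of x gives a
   tableau of T[lam,div,+-]; if the upper neighbour is larger, reflecting
   through its upper left corner gives one of T[lam,.|.,+-]. *)

From Stdlib Require Import ZArith List Lia Permutation Bool FinFun.
Open Scope Z_scope.

(** * Entries and counting *)

Lemma entry_iff n k : entry n k <-> k <> 0 /\ Z.abs k <= Z.of_nat n.
Proof.
  unfold entry, ents. rewrite in_app_iff, !in_map_iff. split.
  - intros [[i [<- Hi]]|[i [<- Hi]]]; apply in_seq in Hi; lia.
  - intros [k_nz k_le]. destruct (Z_lt_le_dec 0 k).
    + left. exists (Z.to_nat k). rewrite in_seq. split; lia.
    + right. exists (Z.to_nat (- k)). rewrite in_seq. split; lia.
Qed.

Lemma entry_opp n k : entry n k -> entry n (- k).
Proof. rewrite !entry_iff. lia. Qed.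

Lemma entry_neq0 n k : entry n k -> k <> 0.
Proof. rewrite entry_iff. lia. Qed.

Lemma ents_NoDup n : NoDup (ents n).
Proof.
  unfold ents. apply NoDup_app.
  - apply Injective_map_NoDup; [intros a b; lia | apply seq_NoDup].
  - apply Injective_map_NoDup; [intros a b; lia | apply seq_NoDup].
  - intros a Ha Hb. rewrite in_map_iff in Ha, Hb.
    destruct Ha as [i [<- Hi]], Hb as [j [Hj Hj']].
    apply in_seq in Hi; apply in_seq in Hj'. lia.
Qed.

Lemma ents_length n : length (ents n) = (2 * n)%nat.
Proof. unfold ents. rewrite length_app, !length_map, length_seq. lia. Qed.

Lemma length_filter_le {A} (l : list A) (f g : A -> bool) :
  (forall x, In x l -> f x = true -> g x = true) ->
  (length (filter f l) <= length (filter g l))%nat.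
Proof.
  induction l as [|a l IH]; simpl; intros H; auto.
  destruct (f a) eqn:E.
  - rewrite (H a (or_introl eq_refl) E). simpl. apply le_n_S, IH. auto.
  - destruct (g a); simpl; [apply le_S|]; apply IH; auto.
Qed.

Lemma length_filter_ents_opp n f :
  length (filter f (ents n)) = length (filter (fun k => f (- k)) (ents n)).
Proof.
  assert (C : forall (h : Z -> bool) (g : nat -> Z) l,
    length (filter h (map g l)) = length (filter (fun x => h (g x)) l)).
  { intros h g l. induction l as [|a l IH]; simpl; auto. destruct (h (g a)); simpl; auto. }
  unfold ents. rewrite !filter_app, !length_app, !C, Nat.add_comm.
  f_equal; apply f_equal, filter_ext; intros; f_equal; lia.
Qed.

Lemma length_filter_split {A} (l : list A) (f g : A -> bool) :
  length (filter f l) =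
  (length (filter (fun x => f x && g x) l) + length (filter (fun x => f x && negb (g x)) l))%nat.
Proof. induction l as [|a l IH]; simpl; auto. destruct (f a), (g a); simpl; lia. Qed.

Section CountingDistinct.
Variable l : list Z.
Hypothesis l_uniq : NoDup l.

Lemma length_filter_remove f a : In a l -> f a = true ->
  length (filter f l) = S (length (filter (fun x => f x && negb (x =? a)) l)).
Proof.
  clear -l_uniq. induction l_uniq as [|y l' y_notin l'_uniq IH]; simpl; intros Ha Hfa;
    [contradiction|].
  destruct Ha as [->|Ha].
  - rewrite Hfa, Z.eqb_refl. simpl. do 2 f_equal. apply filter_ext_in. intros x Hx.
    destruct (Z.eqb_spec x a); subst; [contradiction|]. symmetry; apply andb_true_r.
  - destruct (Z.eqb_spec y a); [subst; contradiction|].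
    destruct (f y); simpl; rewrite IH; auto.
Qed.

Lemma two_le_length_filter f a b : In a l -> In b l -> a <> b ->
  f a = true -> f b = true -> (2 <= length (filter f l))%nat.
Proof.
  intros Ha Hb Hab Hfa Hfb. rewrite (length_filter_remove f a), (length_filter_remove _ b); auto.
  - lia.
  - rewrite Hfb. simpl. destruct (Z.eqb_spec b a); simpl; congruence.
Qed.

Lemma three_le_length_filter f a b c : In a l -> In b l -> In c l ->
  a <> b -> a <> c -> b <> c -> f a = true -> f b = true -> f c = true ->
  (3 <= length (filter f l))%nat.
Proof.
  intros Ha Hb Hc Hab Hac Hbc Hfa Hfb Hfc.
  rewrite (length_filter_remove f a), (length_filter_remove _ b), (length_filter_remove _ c); auto.
  - lia.
  - rewrite Hfc. simpl. destruct (Z.eqb_spec c a), (Z.eqb_spec c b); simpl; congruence.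
  - rewrite Hfb. simpl. destruct (Z.eqb_spec b a); simpl; congruence.
Qed.

Lemma length_filter_succ f g a : In a l -> f a = false -> g a = true ->
  (forall x, In x l -> x <> a -> f x = g x) ->
  length (filter g l) = S (length (filter f l)).
Proof.
  intros Ha Hf Hg H. rewrite (length_filter_remove g a); auto. do 2 f_equal.
  apply filter_ext_in. intros x Hx. destruct (Z.eqb_spec x a); subst.
  - rewrite Hf. apply andb_false_r.
  - rewrite andb_true_r. symmetry; auto.
Qed.

Lemma length_filter_one f a : In a l -> (forall x, In x l -> f x = true <-> x = a) ->
  length (filter f l) = 1%nat.
Proof.
  intros Ha H. rewrite (length_filter_remove f a); [|auto|apply H; auto].
  f_equal. rewrite (filter_ext_in _ (fun _ => false)).
  - clear. induction l; simpl; auto.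
  - intros x Hx. destruct (f x) eqn:E; auto. apply H in E; auto.
    subst. rewrite Z.eqb_refl. auto.
Qed.

Lemma length_filter_two f a b : In a l -> In b l -> a <> b ->
  (forall x, In x l -> f x = true <-> x = a \/ x = b) -> length (filter f l) = 2%nat.
Proof.
  intros Ha Hb Hab H. rewrite (length_filter_remove f a); [|auto|apply H; auto].
  f_equal. apply (length_filter_one _ b); auto. intros x Hx.
  rewrite andb_true_iff, (H x Hx), negb_true_iff, Z.eqb_neq. intuition congruence.
Qed.

End CountingDistinct.

Lemma even_succ_negb c : Nat.even (S c) = negb (Nat.even c).
Proof. rewrite Nat.even_succ, <- Nat.negb_even. auto. Qed.

(** * Boxes *)

Lemma shift_inj b0 b1 t : shift b0 t = shift b1 t -> b0 = b1.
Proof.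
  destruct b0 as [i0 j0], b1 as [i1 j1]. unfold shift. simpl.
  intros E. injection E. intros. f_equal; lia.
Qed.

Lemma content_shift b t : content (shift b t) = content b + content t.
Proof. unfold content, shift. simpl. lia. Qed.

Lemma paired_iff p k : paired p k = true <-> p k = p (- k).
Proof.
  unfold paired, beq_box. destruct (p k) as [i j], (p (- k)) as [i' j']. simpl.
  rewrite andb_true_iff, !Z.eqb_eq. split; [intros [-> ->]; auto | intros E; injection E; auto].
Qed.

Lemma paired_opp p k : paired p (- k) = paired p k.
Proof.
  apply eq_true_iff_eq. rewrite !paired_iff, Z.opp_involutive. split; auto.
Qed.

Lemma lval_ge p k : k <= lval p k.
Proof. unfold lval. destruct paired; lia. Qed.

Lemma rval_le p k : rval p k <= k.
Proof. unfold rval. destruct paired; lia. Qed.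

Lemma lval_opp p k : lval p (- k) = - rval p k.
Proof. unfold lval, rval. rewrite paired_opp. destruct (paired p k); lia. Qed.

Lemma rval_opp p k : rval p (- k) = - lval p k.
Proof. unfold lval, rval. rewrite paired_opp. destruct (paired p k); lia. Qed.

Definition rot (A : Z) (b : box) : box := (A - fst b, A - snd b).

Lemma rot_involutive A b : rot A (rot A b) = b.
Proof. destruct b as [i j]. unfold rot. simpl. f_equal; lia. Qed.

Lemma rot_inj A b0 b1 : rot A b0 = rot A b1 -> b0 = b1.
Proof. intros E. rewrite <- (rot_involutive A b0), E. apply rot_involutive. Qed.

Lemma content_rot A b : content (rot A b) = - content b.
Proof. unfold content, rot. simpl. lia. Qed.

Ltac box_lia := unfold content, shift, rot in *; cbn [fst snd] in *; lia.

Definition rowcol_lt (b0 b1 : box) : Prop :=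
  (fst b0 = fst b1 /\ snd b0 < snd b1) \/ (snd b0 = snd b1 /\ fst b0 < fst b1).

Lemma rowcol_lt_rot A a b : rowcol_lt (rot A a) (rot A b) <-> rowcol_lt b a.
Proof. unfold rowcol_lt, rot. simpl. lia. Qed.

Definition box_le (a b : box) : Prop := fst a <= fst b /\ snd a <= snd b.

Lemma box_eq_dec (a b : box) : {a = b} + {a <> b}.
Proof. decide equality; apply Z.eq_dec. Qed.

Lemma box_neq (a b : box) : a <> b -> fst a <> fst b \/ snd a <> snd b.
Proof.
  destruct a as [i j], b as [i' j']. simpl. intros H.
  destruct (Z.eq_dec i i'); subst; auto. right. congruence.
Qed.

Lemma exists_max {A} (g : A -> Z) (l : list A) : l <> nil ->
  exists a, In a l /\ forall a', In a' l -> g a' <= g a.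
Proof.
  induction l as [|a l IH]; intros H; [congruence|].
  destruct l as [|c l'].
  - exists a. split; [left; auto|]. intros a' [<-|[]]; lia.
  - destruct IH as [b [Hb Hmax]]; [discriminate|].
    destruct (Z_le_dec (g a) (g b)).
    + exists b. split; [right; auto|]. intros a' [<-|Ha']; auto.
    + exists a. split; [left; auto|]. intros a' [<-|Ha']; [lia|]. specialize (Hmax a' Ha'); lia.
Qed.

Lemma exists_min_content (lam : list box) : lam <> nil ->
  exists bs, In bs lam /\ forall b, In b lam -> content bs <= content b.
Proof.
  intros Hne. destruct (exists_max (fun b => - content b) lam Hne) as [bs [Hbs Hmax]].
  exists bs. split; auto. intros b Hb. specialize (Hmax b Hb). lia.
Qed.

Lemma shift_closed_zero (lam : list box) (d : box) : lam <> nil ->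
  (forall b, In b lam -> In (shift b d) lam) -> d = (0, 0).
Proof.
  intros Hne Hcl.
  assert (Hle : forall (g : box -> Z) c, (forall b, g (shift b d) = g b + c) -> c <= 0).
  { intros g c Hg. destruct (exists_max g lam Hne) as [b [Hb Hmax]].
    specialize (Hmax _ (Hcl b Hb)). rewrite Hg in Hmax. lia. }
  pose proof (Hle fst (fst d) ltac:(reflexivity)).
  pose proof (Hle (fun b => - fst b) (- fst d) ltac:(intros; unfold shift; simpl; lia)).
  pose proof (Hle snd (snd d) ltac:(reflexivity)).
  pose proof (Hle (fun b => - snd b) (- snd d) ltac:(intros; unfold shift; simpl; lia)).
  destruct d; simpl in *; f_equal; lia.
Qed.

Lemma min_content_corner (lam : list box) bs : skew (fun b => In b lam) -> In bs lam ->
  (forall b, In b lam -> content bs <= content b) ->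
  forall b, In b lam -> fst b <= fst bs /\ snd bs <= snd b.
Proof.
  intros Hsk Hbs Hmin b Hb. pose proof (Hmin b Hb). split.
  - apply Z.nlt_ge. intros Hlt.
    assert (Hc : In (fst b, snd bs) lam) by (apply (Hsk bs _ b); simpl; auto; box_lia).
    specialize (Hmin _ Hc). box_lia.
  - apply Z.nlt_ge. intros Hlt.
    assert (Hc : In (fst bs, snd b) lam) by (apply (Hsk b _ bs); simpl; auto; box_lia).
    specialize (Hmin _ Hc). box_lia.
Qed.

(** * Half fillings *)

Definition imageb (lam : list box) (F : box -> Z) (k : Z) : bool :=
  existsb (fun b => F b =? k) lam.

Lemma imageb_iff lam F k : imageb lam F k = true <-> exists b, In b lam /\ F b = k.
Proof.
  unfold imageb. rewrite existsb_exists.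
  split; intros [b [Hb E]]; exists b; split; auto; apply Z.eqb_eq; auto.
Qed.

Record half_filling (lam : list box) (F : box -> Z) : Prop := {
  hf_entry : forall b, In b lam -> entry (length lam) (F b);
  hf_inj : forall b0 b1, In b0 lam -> In b1 lam -> F b0 = F b1 -> b0 = b1;
  hf_opp : forall b0 b1, In b0 lam -> In b1 lam -> F b0 <> - F b1;
  hf_standard : forall b0 b1, In b0 lam -> In b1 lam -> rowcol_lt b0 b1 -> F b0 < F b1 }.

Definition neg_count (lam : list box) (F : box -> Z) : nat :=
  length (filter (fun k => (k <? 0) && imageb lam F k) (ents (length lam))).

Section HalfFilling.
Variables (lam : list box) (F : box -> Z).
Hypotheses (lam_uniq : NoDup lam) (HF : half_filling lam F).
Local Notation n := (length lam).

Lemma imageb_F b : In b lam -> imageb lam F (F b) = true.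
Proof. intros Hb. apply imageb_iff. eauto. Qed.

Lemma imageb_opp_F b : In b lam -> imageb lam F (- F b) = false.
Proof.
  intros Hb. destruct (imageb lam F (- F b)) eqn:E; auto.
  apply imageb_iff in E as [b' [Hb' E]]. exfalso. exact (hf_opp _ _ HF b' b Hb' Hb E).
Qed.

Lemma half_filling_cover k : entry n k -> exists b, In b lam /\ (F b = k \/ F b = - k).
Proof.
  intros Hk.
  set (absF := map (fun b => Z.abs (F b)) lam).
  set (pos := map Z.of_nat (seq 1 n)).
  assert (absF_uniq : NoDup absF).
  { apply NoDup_map_NoDup_ForallPairs; auto. intros x y Hx Hy E.
    destruct (Z.abs_eq_or_opp (F x)), (Z.abs_eq_or_opp (F y)).
    1, 4: apply (hf_inj _ _ HF); auto; lia.
    all: exfalso; apply (hf_opp _ _ HF x y); auto; lia. }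
  assert (Hincl : incl pos absF).
  { apply NoDup_length_incl; auto.
    - unfold absF, pos. rewrite !length_map, length_seq. lia.
    - intros x Hx. unfold absF in Hx. rewrite in_map_iff in Hx. destruct Hx as [b [<- Hb]].
      pose proof (hf_entry _ _ HF b Hb) as He. rewrite entry_iff in He. unfold pos.
      rewrite in_map_iff. exists (Z.to_nat (Z.abs (F b))). rewrite in_seq. split; lia. }
  assert (Hk' : In (Z.abs k) pos).
  { rewrite entry_iff in Hk. unfold pos. rewrite in_map_iff. exists (Z.to_nat (Z.abs k)).
    rewrite in_seq. split; lia. }
  apply Hincl in Hk'. unfold absF in Hk'. rewrite in_map_iff in Hk'.
  destruct Hk' as [b [Hb Hb']]. exists b. split; auto. lia.
Qed.

Lemma image_length : length (filter (imageb lam F) (ents n)) = n.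
Proof.
  transitivity (length (map F lam)); [|apply length_map]. apply Permutation_length.
  apply NoDup_Permutation.
  - apply NoDup_filter, ents_NoDup.
  - apply NoDup_map_NoDup_ForallPairs; auto. intros x y Hx Hy. apply (hf_inj _ _ HF); auto.
  - intros x. rewrite filter_In, in_map_iff, imageb_iff. split.
    + intros [_ [b [Hb E]]]. eauto.
    + intros [b [<- Hb]]. split; [apply (hf_entry _ _ HF); auto | eauto].
Qed.

Lemma half_filling_row_le b c : In b lam -> In c lam ->
  fst b = fst c -> snd b <= snd c -> F b <= F c.
Proof.
  intros Hb Hc H1 H2. destruct (Z.eq_dec (snd b) (snd c)).
  - assert (b = c) as -> by (destruct b, c; simpl in *; subst; auto). lia.
  - enough (F b < F c) by lia. apply (hf_standard _ _ HF); auto. left. lia.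
Qed.

Lemma half_filling_col_le b c : In b lam -> In c lam ->
  snd b = snd c -> fst b <= fst c -> F b <= F c.
Proof.
  intros Hb Hc H1 H2. destruct (Z.eq_dec (fst b) (fst c)).
  - assert (b = c) as -> by (destruct b, c; simpl in *; subst; auto). lia.
  - enough (F b < F c) by lia. apply (hf_standard _ _ HF); auto. right. lia.
Qed.

End HalfFilling.

Lemma filling_ofE lam n (p : Tab) (Q : box -> Z -> Prop) F :
  filling_of lam (fun b e => entry n e /\ p e = b /\ Q b e) F ->
  exists t,
    (forall b, In b lam -> entry n (F b) /\ p (F b) = shift b t /\ Q (shift b t) (F b)) /\
    (forall k, entry n k -> Q (p k) k -> exists b, In b lam /\ F b = k).
Proof.
  intros [t [H1 H2]]. exists t. split.
  - intros b Hb. apply (H2 b Hb (F b)). auto.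
  - intros k Hk HQ.
    destruct (proj1 (H1 (p k)) (ex_intro _ k (conj Hk (conj eq_refl HQ)))) as [b [Hb E]].
    exists b. split; auto. symmetry. apply (H2 b Hb k). rewrite <- E. auto.
Qed.

Lemma half_filling_of_tableau lam (p : Tab) F t :
  standard (length lam) p ->
  (forall b, In b lam -> entry (length lam) (F b) /\ p (F b) = shift b t) ->
  (forall b0 b1, In b0 lam -> In b1 lam -> F b0 <> - F b1) ->
  half_filling lam F.
Proof.
  intros Hst Hp Hopp. constructor; auto.
  - apply Hp.
  - intros b0 b1 Hb0 Hb1 E. apply (shift_inj _ _ t).
    rewrite <- (proj2 (Hp b0 Hb0)), <- (proj2 (Hp b1 Hb1)), E. auto.
  - intros b0 b1 Hb0 Hb1 Hlt.
    destruct (Hp b0 Hb0) as [E0 P0], (Hp b1 Hb1) as [E1 P1].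
    pose proof (Hst (F b0) (F b1) E0 E1) as Hs. rewrite P0, P1 in Hs.
    pose proof (lval_ge p (F b0)). pose proof (rval_le p (F b1)).
    enough (lval p (F b0) < rval p (F b1)) by lia.
    apply Hs. unfold rowcol_lt, shift in *. simpl. lia.
Qed.

Lemma neg_count_nneg lam F (p : Tab) (P : box -> bool) :
  (forall k, entry (length lam) k -> k < 0 -> imageb lam F k = P (p k)) ->
  neg_count lam F = nneg (length lam) p P.
Proof.
  intros H. unfold neg_count, nneg. f_equal. apply filter_ext_in. intros k Hk.
  destruct (Z.ltb_spec k 0); simpl; auto.
Qed.

Lemma neg_count_nneg_except lam F (p : Tab) (P : box -> bool) a :
  entry (length lam) a -> a < 0 -> P (p a) = false ->
  (forall k, entry (length lam) k -> k < 0 -> k <> a -> imageb lam F k = P (p k)) ->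
  neg_count lam F = ((if imageb lam F a then 1 else 0) + nneg (length lam) p P)%nat.
Proof.
  intros Ha Ha0 HPa H. destruct (imageb lam F a) eqn:Ea.
  - unfold neg_count, nneg. apply (length_filter_succ _ (ents_NoDup _) _ _ a); auto.
    + rewrite HPa. apply andb_false_r.
    + rewrite Ea, andb_true_r. apply Z.ltb_lt; auto.
    + intros k Hk Hka. destruct (Z.ltb_spec k 0); simpl; auto. symmetry; auto.
  - apply neg_count_nneg. intros k Hk Hk0. destruct (Z.eq_dec k a) as [->|]; auto. congruence.
Qed.

Lemma neg_count_succ lam F F' a : entry (length lam) a -> a < 0 ->
  imageb lam F a = false -> imageb lam F' a = true ->
  (forall k, entry (length lam) k -> k < 0 -> k <> a -> imageb lam F k = imageb lam F' k) ->
  neg_count lam F' = S (neg_count lam F).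
Proof.
  intros Ha Ha0 Hout Hin H. apply (length_filter_succ _ (ents_NoDup _) _ _ a); auto.
  - rewrite Hout. apply andb_false_r.
  - rewrite Hin, andb_true_r. apply Z.ltb_lt; auto.
  - intros k Hk Hka. destruct (Z.ltb_spec k 0); simpl; auto.
Qed.

(** * The nonnegative half of a tableau of T[lam,0,+-] *)

Record zero_half (lam : list box) (p : Tab) (F : box -> Z) (t : box) : Prop := {
  zh_filling : half_filling lam F;
  zh_shift : forall b, In b lam -> p (F b) = shift b t;
  zh_nonneg : forall b, In b lam -> 0 <= content (shift b t);
  zh_zero : exists b, In b lam /\ content (shift b t) = 0;
  zh_zero_pair : forall k l, entry (length lam) k -> entry (length lam) l ->
    content (p k) = 0 -> content (p l) = 0 -> l = k \/ l = - k }.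

(* [nboxes n p zerob] counts the entries satisfying this predicate. *)
Definition counted_zero (p : Tab) (k : Z) : bool :=
  zerob (p k) && (negb (paired p k) || (0 <? k)).

Section OneZeroBox.
Variables (n : nat) (p : Tab).
Hypothesis p_opp : forall k, entry n k -> content (p (- k)) = - content (p k).
Hypothesis one_zero_box : nboxes n p zerob = 1%nat.

Lemma zero_content_paired y : entry n y -> content (p y) = 0 -> p y = p (- y).
Proof.
  intros Hy Hc. destruct (paired p y) eqn:E; [apply paired_iff; auto|].
  assert (E' : paired p (- y) = false).
  { destruct (paired p (- y)) eqn:E'; auto. apply paired_iff in E'.
    rewrite Z.opp_involutive in E'. assert (paired p y = true) by (apply paired_iff; congruence).
    congruence. }
  enough (2 <= nboxes n p zerob)%nat by lia.
  apply (two_le_length_filter _ (ents_NoDup n) _ y (- y)); auto.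
  - apply entry_opp; auto.
  - pose proof (entry_neq0 _ _ Hy). lia.
  - unfold counted_zero, zerob. rewrite Hc, E. auto.
  - unfold counted_zero, zerob. rewrite p_opp, Hc, E' by auto. auto.
Qed.

Lemma zero_content_abs y : entry n y -> content (p y) = 0 ->
  entry n (Z.abs y) /\ content (p (Z.abs y)) = 0 /\ counted_zero p (Z.abs y) = true.
Proof.
  intros Hy Hc.
  assert (entry n (Z.abs y) /\ content (p (Z.abs y)) = 0) as [Ha Hac].
  { destruct (Z.abs_eq_or_opp y) as [E|E]; rewrite E; split; auto using entry_opp.
    rewrite p_opp; auto; lia. }
  pose proof (entry_neq0 _ _ Hy).
  repeat split; auto. unfold counted_zero, zerob. rewrite Hac. simpl.
  replace (0 <? Z.abs y) with true by (symmetry; apply Z.ltb_lt; lia). apply orb_true_r.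
Qed.

Lemma zero_content_pair y w : entry n y -> entry n w ->
  content (p y) = 0 -> content (p w) = 0 -> w = y \/ w = - y.
Proof.
  intros Hy Hw Hcy Hcw.
  destruct (zero_content_abs y Hy Hcy) as [Ay [_ Cy]], (zero_content_abs w Hw Hcw) as [Aw [_ Cw]].
  destruct (Z.eq_dec (Z.abs y) (Z.abs w)); [lia|].
  enough (2 <= nboxes n p zerob)%nat by lia.
  apply (two_le_length_filter _ (ents_NoDup n) _ (Z.abs y) (Z.abs w)); auto.
Qed.

Lemma zero_content_exists : exists j, entry n j /\ 0 < j /\ content (p j) = 0.
Proof.
  destruct (filter (counted_zero p) (ents n)) as [|k l] eqn:E.
  - change (length (filter (counted_zero p) (ents n)) = 1%nat) in one_zero_box.
    rewrite E in one_zero_box. discriminate.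
  - assert (Hk : In k (filter (counted_zero p) (ents n))) by (rewrite E; left; auto).
    apply filter_In in Hk as [Hk Hc]. apply andb_true_iff in Hc as [Hz _].
    unfold zerob in Hz. apply Z.eqb_eq in Hz.
    destruct (zero_content_abs k Hk Hz) as [Ha [Hac _]].
    exists (Z.abs k). pose proof (entry_neq0 _ _ Hk). repeat split; auto. lia.
Qed.

Lemma nonneg_filling_no_opp lam F t :
  (forall b, In b lam -> entry n (F b) /\ p (F b) = shift b t /\ 0 <= content (shift b t)) ->
  forall b0 b1, In b0 lam -> In b1 lam -> F b0 <> - F b1.
Proof.
  intros Himg b0 b1 Hb0 Hb1 E.
  destruct (Himg b0 Hb0) as [E0 [P0 C0]], (Himg b1 Hb1) as [E1 [P1 C1]].
  assert (Hz : content (p (F b0)) = 0).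
  { pose proof (p_opp _ E1) as Hopp. rewrite <- E, P0, P1 in Hopp. rewrite P0. lia. }
  pose proof (zero_content_paired _ E0 Hz) as Hpair.
  replace (- F b0) with (F b1) in Hpair by lia. rewrite P0, P1 in Hpair.
  apply shift_inj in Hpair. subst b1. pose proof (entry_neq0 _ _ E0). lia.
Qed.

End OneZeroBox.

Lemma Rbox_zero_half lam s p F : NoDup lam -> Rbox lam s p F ->
  DYoung (length lam) p /\ Nat.even (neg_count lam F) = s /\ exists t, zero_half lam p F t.
Proof.
  unfold Rbox; cbv zeta. intros lam_uniq [[HY Hst] [Hone Hfill]].
  set (n := length lam) in *. set (c := nneg n p posb) in *.
  pose proof HY as [_ [p_opp _]].
  apply filling_ofE in Hfill as [t [Himg Hcov]].
  destruct (zero_content_exists n p p_opp Hone) as [j [Hj [Hjpos Hjc]]].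
  assert (Hmj : entry n (- j)) by (apply entry_opp; auto).
  assert (Hmjc : content (p (- j)) = 0) by (rewrite p_opp; auto; lia).
  assert (HF : half_filling lam F).
  { apply (half_filling_of_tableau lam p F t Hst).
    - intros b Hb. destruct (Himg b Hb) as [? [? _]]; auto.
    - apply (nonneg_filling_no_opp n p p_opp Hone lam F t).
      intros b Hb. destruct (Himg b Hb) as [? [? [? _]]]; auto. }
  assert (Hneg : forall x, entry n x -> x < 0 -> x <> - j -> imageb lam F x = posb (p x)).
  { intros x Hx Hx0 Hxj. unfold posb. destruct (Z.ltb_spec 0 (content (p x))).
    - apply imageb_iff, Hcov; auto. split; [lia | intros; lia].
    - destruct (imageb lam F x) eqn:E; auto. apply imageb_iff in E as [b [Hb <-]].
      destruct (Himg b Hb) as [Eb [Pb [Cb _]]].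
      assert (content (p (F b)) = 0) by (rewrite Pb in *; lia).
      destruct (zero_content_pair n p p_opp Hone j (F b)); auto; lia. }
  assert (Hmj_in : imageb lam F (- j) = true <-> Nat.even c <> s).
  { rewrite imageb_iff. split.
    - intros [b [Hb Eb]] Hc. destruct (Himg b Hb) as [_ [Pb [_ Zb]]].
      rewrite <- Pb, Eb in Zb. apply (Zb Hmjc) in Hc. lia.
    - intros Hc. apply Hcov; auto. split; [lia|]. intros _. split; [lia|congruence]. }
  assert (Hpar : Nat.even (neg_count lam F) = s).
  { rewrite (neg_count_nneg_except lam F p posb (- j)), Nat.even_add; auto; try lia.
    2: unfold posb; rewrite Hmjc; auto.
    change (nneg (length lam) p posb) with c. destruct (imageb lam F (- j)) eqn:E.
    - pose proof (proj1 Hmj_in eq_refl). destruct (Nat.even c), s; simpl; congruence.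
    - destruct (Bool.bool_dec (Nat.even c) s) as [<-|Hc]; [destruct (Nat.even c); auto|].
      apply Hmj_in in Hc. congruence. }
  split; [exact HY|]. split; [exact Hpar|]. exists t. constructor; auto.
  - intros b Hb. apply Himg; auto.
  - intros b Hb. destruct (Himg b Hb) as [_ [<- [Cb _]]]. auto.
  - destruct (half_filling_cover lam F lam_uniq HF j Hj) as [b [Hb Eb]]. exists b. split; auto.
    destruct (Himg b Hb) as [_ [<- _]]. destruct Eb as [-> | ->]; auto.
  - intros k l Hk Hl Hkc Hlc. apply (zero_content_pair n p p_opp Hone); auto.
Qed.

Lemma nboxes_unpaired n (p : Tab) Q : (forall k, entry n k -> paired p k = false) ->
  nboxes n p Q = length (filter (fun k => Q (p k)) (ents n)).
Proof.
  intros H. unfold nboxes. f_equal. apply filter_ext_in. intros k Hk.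
  rewrite H; auto. apply andb_true_r.
Qed.

Section SplitTableau.
Variables (n : nat) (p : Tab) (P : box -> bool).
Hypothesis p_opp : forall k, entry n k -> content (p (- k)) = - content (p k).
Hypothesis two_zero_boxes : nboxes n p zerob = 2%nat.
Hypothesis P_boxes : nboxes n p P = n.
Hypothesis notP_boxes : nboxes n p (fun b => negb (P b)) = n.
Hypothesis P_nonneg : forall k, entry n k -> P (p k) = true -> 0 <= content (p k).
Hypothesis notP_nonpos : forall k, entry n k -> P (p k) = false -> content (p k) <= 0.

(* The two parts have [2n] boxes together, as many as there are entries. *)
Lemma split_unpaired k : entry n k -> paired p k = false.
Proof.
  set (X := fun k => negb (paired p k) || (0 <? k)).
  assert (Hall : forall k, In k (ents n) -> X k = true).
  { apply forallb_forall, filter_length_forallb. rewrite ents_length.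
    rewrite (length_filter_split _ X (fun k => P (p k))).
    unfold nboxes in P_boxes, notP_boxes.
    rewrite (filter_ext _ (fun k => P (p k) && X k)) by (intros; apply andb_comm).
    rewrite (filter_ext (fun k => X k && negb (P (p k))) (fun k => negb (P (p k)) && X k))
      by (intros; apply andb_comm).
    unfold X. lia. }
  intros Hk. destruct (paired p k) eqn:E; auto. exfalso.
  apply paired_iff in E. pose proof (entry_neq0 _ _ Hk).
  destruct (Z_lt_le_dec k 0).
  - specialize (Hall k Hk). unfold X in Hall.
    replace (paired p k) with true in Hall by (symmetry; apply paired_iff; auto).
    simpl in Hall. apply Z.ltb_lt in Hall. lia.
  - specialize (Hall (- k) (entry_opp _ _ Hk)). unfold X in Hall.
    replace (paired p (- k)) with true in Hall
      by (symmetry; apply paired_iff; rewrite Z.opp_involutive; auto).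
    simpl in Hall. apply Z.ltb_lt in Hall. lia.
Qed.

Lemma split_zero_pair k l : entry n k -> entry n l ->
  content (p k) = 0 -> content (p l) = 0 -> l = k \/ l = - k.
Proof.
  intros Hk Hl Hkc Hlc. destruct (Z.eq_dec l k) as [|Hlk]; auto.
  destruct (Z.eq_dec l (- k)) as [|Hlmk]; auto. exfalso.
  assert (3 <= length (filter (fun k => zerob (p k)) (ents n)))%nat; [|
    rewrite <- nboxes_unpaired in H by exact split_unpaired; lia].
  pose proof (entry_neq0 _ _ Hk).
  apply (three_le_length_filter _ (ents_NoDup n) _ k (- k) l); auto; try lia.
  - apply entry_opp; auto.
  - unfold zerob. apply Z.eqb_eq. auto.
  - unfold zerob. apply Z.eqb_eq. rewrite p_opp; auto; lia.
  - unfold zerob. apply Z.eqb_eq. auto.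
Qed.

(* [-k] would leave a box of content [0] in the [P]-part, and then [l |-> -l]
   maps the other part into the [P]-part minus [k] and [-k]. *)
Lemma split_no_opp k : entry n k -> P (p k) = true -> P (p (- k)) = true -> False.
Proof.
  intros Hk Pk Pmk.
  assert (Hkc : content (p k) = 0).
  { pose proof (P_nonneg _ Hk Pk). pose proof (P_nonneg _ (entry_opp _ _ Hk) Pmk).
    rewrite p_opp in *; auto. lia. }
  assert (Hknz : k <> - k) by (pose proof (entry_neq0 _ _ Hk); lia).
  pose proof P_boxes as HP. pose proof notP_boxes as HnP.
  rewrite !nboxes_unpaired in HP, HnP by exact split_unpaired.
  enough (length (filter (fun l => negb (P (p l))) (ents n)) + 2
          <= length (filter (fun l => P (p l)) (ents n)))%nat by lia.
  rewrite (length_filter_ents_opp n (fun l => negb (P (p l)))).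
  rewrite (length_filter_remove _ (ents_NoDup n) (fun l => P (p l)) k) by auto.
  rewrite (length_filter_remove _ (ents_NoDup n) (fun l => P (p l) && negb (l =? k)) (- k)).
  2: apply entry_opp; auto.
  2: { rewrite Pmk. simpl. destruct (Z.eqb_spec (- k) k); simpl; auto; lia. }
  enough (length (filter (fun l => negb (P (p (- l)))) (ents n)) <=
    length (filter (fun l => P (p l) && negb (l =? k)%Z && negb (l =? - k)%Z) (ents n)))%nat
    by lia.
  apply length_filter_le. intros l Hl Hml. apply negb_true_iff in Hml.
  pose proof (notP_nonpos _ (entry_opp _ _ Hl) Hml) as Hc. rewrite p_opp in Hc; auto.
  assert (Hlc : content (p l) <> 0).
  { intros Hlc. destruct (split_zero_pair k l) as [->| ->]; auto; [congruence|].
    rewrite Z.opp_involutive in Hml. congruence. }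
  destruct (P (p l)) eqn:Pl; [|pose proof (notP_nonpos _ Hl Pl); lia].
  destruct (Z.eqb_spec l k); [subst; lia|]. destruct (Z.eqb_spec l (- k)); [subst|auto].
  rewrite p_opp in Hlc; auto; lia.
Qed.

End SplitTableau.

Lemma Rsplit_zero_half horiz lam s p F : NoDup lam -> Rsplit horiz lam s p F ->
  DYoung (length lam) p /\ Nat.even (neg_count lam F) = s /\ exists t, zero_half lam p F t.
Proof.
  unfold Rsplit; cbv zeta. set (n := length lam).
  intros lam_uniq [[HY Hst] [Htwo [c0 [side [HP [HnP [Hpos [Hneg [Hfill Hpar]]]]]]]]].
  set (P := fun b : box => Bool.eqb (if horiz then fst b <=? c0 else snd b <=? c0) side) in *.
  pose proof HY as [_ [p_opp _]].
  apply filling_ofE in Hfill as [t [Himg Hcov]].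
  assert (HimgP : forall k, entry n k -> imageb lam F k = P (p k)).
  { intros k Hk. destruct (P (p k)) eqn:Pk.
    - apply imageb_iff, Hcov; auto.
    - destruct (imageb lam F k) eqn:E; auto. apply imageb_iff in E as [b [Hb <-]].
      destruct (Himg b Hb) as [_ [Pb Qb]]. change (P (shift b t) = true) in Qb. congruence. }
  assert (HF : half_filling lam F).
  { apply (half_filling_of_tableau lam p F t Hst).
    { intros b Hb. destruct (Himg b Hb) as [? [? _]]; auto. }
    intros b0 b1 Hb0 Hb1 E. destruct (Himg b0 Hb0) as [E0 [P0 Q0]], (Himg b1 Hb1) as [E1 [P1 Q1]].
    apply (split_no_opp n p P p_opp Htwo HP HnP Hpos Hneg (F b0)); auto.
    - rewrite P0. auto.
    - replace (- F b0) with (F b1) by lia. rewrite P1. auto. }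
  split; [exact HY|]. split.
  { rewrite <- Hpar. f_equal. apply neg_count_nneg. intros k Hk _. auto. }
  exists t. constructor; auto.
  - intros b Hb. apply Himg; auto.
  - intros b Hb. destruct (Himg b Hb) as [Eb [<- Qb]]. auto.
  - assert (Hex : exists k, In k (filter (fun k => zerob (p k)) (ents n))).
    { rewrite nboxes_unpaired in Htwo by (apply (split_unpaired n p P); auto).
      destruct (filter _ _) as [|k l]; [discriminate|]. exists k. left; auto. }
    destruct Hex as [k Hk]. apply filter_In in Hk as [Hk Hkc]. unfold zerob in Hkc.
    apply Z.eqb_eq in Hkc.
    destruct (half_filling_cover lam F lam_uniq HF k Hk) as [b [Hb Eb]]. exists b. split; auto.
    destruct (Himg b Hb) as [_ [<- _]]. destruct Eb as [-> | ->]; auto. rewrite p_opp; auto. lia.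
  - apply (split_zero_pair n p P p_opp Htwo HP HnP).
Qed.

Lemma R0_zero_half lam s p F : NoDup lam -> R0 lam s p F ->
  DYoung (length lam) p /\ Nat.even (neg_count lam F) = s /\ exists t, zero_half lam p F t.
Proof.
  intros lam_uniq [H|[H|H]].
  - exact (Rbox_zero_half lam s p F lam_uniq H).
  - exact (Rsplit_zero_half true lam s p F lam_uniq H).
  - exact (Rsplit_zero_half false lam s p F lam_uniq H).
Qed.

Lemma R0_nonempty lam s p F : NoDup lam -> R0 lam s p F -> lam <> nil.
Proof.
  intros lam_uniq HR0 ->. destruct (R0_zero_half _ _ _ _ lam_uniq HR0) as [_ [_ [t ZH]]].
  destruct (zh_zero _ _ _ _ ZH) as [b [[] _]].
Qed.

Section ZeroHalf.
Variables (lam : list box) (p : Tab).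
Hypothesis lam_uniq : NoDup lam.
Hypothesis p_opp : forall k, entry (length lam) k -> content (p (- k)) = - content (p k).
Local Notation n := (length lam).

Lemma zero_half_image F t k : zero_half lam p F t -> entry n k -> content (p k) <> 0 ->
  imageb lam F k = true <-> 0 < content (p k).
Proof.
  intros ZH Hk Hc.
  pose proof (zh_shift _ _ _ _ ZH) as Hpos. pose proof (zh_nonneg _ _ _ _ ZH) as Hge.
  split.
  - intros Hin. apply imageb_iff in Hin as [b [Hb <-]]. rewrite Hpos in *; auto.
    specialize (Hge b Hb). lia.
  - intros Hgt. destruct (half_filling_cover lam F lam_uniq (zh_filling _ _ _ _ ZH) k Hk)
      as [b [Hb [E|E]]]; [apply imageb_iff; eauto|].
    specialize (Hge b Hb). rewrite <- Hpos, E, p_opp in Hge; auto. lia.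
Qed.

(* Two nonnegative halves of [p] can only differ on the pair of entries of
   content [0], and then their numbers of negative entries differ by one. *)
Lemma zero_half_image_incl F F' t t' k :
  zero_half lam p F t -> zero_half lam p F' t' ->
  Nat.even (neg_count lam F) = Nat.even (neg_count lam F') ->
  entry n k -> imageb lam F k = true -> imageb lam F' k = true.
Proof.
  intros ZH ZH' Hpar Hk Hin. destruct (imageb lam F' k) eqn:Hout; auto. exfalso.
  pose proof (zh_filling _ _ _ _ ZH) as HF. pose proof (zh_filling _ _ _ _ ZH') as HF'.
  apply imageb_iff in Hin as [b0 [Hb0 E0]].
  destruct (half_filling_cover lam F' lam_uniq HF' k Hk) as [b1 [Hb1 [E1|E1]]].
  { rewrite <- E1, imageb_F in Hout; auto. discriminate. }
  assert (Hkc : content (p k) = 0).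
  { pose proof (zh_nonneg _ _ _ _ ZH b0 Hb0). pose proof (zh_nonneg _ _ _ _ ZH' b1 Hb1).
    rewrite <- (zh_shift _ _ _ _ ZH), E0 in *; auto.
    rewrite <- (zh_shift _ _ _ _ ZH'), E1 in *; auto.
    rewrite p_opp in *; auto. lia. }
  assert (Hsame : forall l, entry n l -> l <> k -> l <> - k -> imageb lam F l = imageb lam F' l).
  { intros l Hl Hlk Hlmk. assert (Hlc : content (p l) <> 0).
    { intros Hlc. destruct (zh_zero_pair _ _ _ _ ZH k l); auto. }
    apply eq_true_iff_eq. rewrite (zero_half_image F t), (zero_half_image F' t'); auto. tauto. }
  assert (Hmk : imageb lam F (- k) = false) by (rewrite <- E0; apply imageb_opp_F; auto).
  assert (Hmk' : imageb lam F' (- k) = true) by (apply imageb_iff; exists b1; split; auto; lia).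
  pose proof (entry_neq0 _ _ Hk).
  assert (Hdiff : neg_count lam F' = S (neg_count lam F) \/ neg_count lam F = S (neg_count lam F')).
  { destruct (Z_lt_le_dec 0 k).
    - left. apply (neg_count_succ lam F F' (- k)); auto using entry_opp; try lia.
      intros x Hx Hx0 Hxk. apply Hsame; auto; lia.
    - right. apply (neg_count_succ lam F' F k); auto; try lia.
      + rewrite <- E0. apply imageb_F; auto.
      + intros x Hx Hx0 Hxk. symmetry. apply Hsame; auto; lia. }
  destruct Hdiff as [E|E]; rewrite E, even_succ_negb in Hpar; destruct (Nat.even _); discriminate.
Qed.

Lemma zero_half_unique F F' t t' :
  zero_half lam p F t -> zero_half lam p F' t' ->
  Nat.even (neg_count lam F) = Nat.even (neg_count lam F') ->
  forall b, In b lam -> F b = F' b.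
Proof.
  intros ZH ZH' Hpar.
  assert (Hmatch : forall b0, In b0 lam ->
            exists b1, In b1 lam /\ F' b1 = F b0 /\ shift b0 t = shift b1 t').
  { intros b0 Hb0.
    assert (Hin : imageb lam F' (F b0) = true).
    { apply (zero_half_image_incl F F' t t'); auto.
      - apply (hf_entry _ _ (zh_filling _ _ _ _ ZH)); auto.
      - apply imageb_F; auto. }
    apply imageb_iff in Hin as [b1 [Hb1 E]]. exists b1. repeat split; auto.
    rewrite <- (zh_shift _ _ _ _ ZH), <- (zh_shift _ _ _ _ ZH'), E; auto. }
  assert (Htt : t = t').
  { assert (Hd : (fst t - fst t', snd t - snd t') = (0, 0)).
    { apply (shift_closed_zero lam); [intros ->; destruct (zh_zero _ _ _ _ ZH) as [? []]; auto|].
      intros b0 Hb0. destruct (Hmatch b0 Hb0) as [b1 [Hb1 [_ E]]].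
      replace (shift b0 _) with b1; auto.
      destruct b0, b1, t, t'; unfold shift in *; simpl in *. injection E. intros. f_equal; lia. }
    injection Hd. destruct t, t'; simpl. intros. f_equal; lia. }
  subst t'. intros b Hb. destruct (Hmatch b Hb) as [b1 [Hb1 [E Hs]]].
  apply shift_inj in Hs. subst. auto.
Qed.

Lemma zero_half_same_tableau p' F t t' :
  (forall k, entry n k -> content (p' (- k)) = - content (p' k)) ->
  zero_half lam p F t -> zero_half lam p' F t' -> same_tableau n p p'.
Proof.
  intros p'_opp ZH ZH' k Hk.
  destruct (zh_zero _ _ _ _ ZH) as [b0 [Hb0 C0]], (zh_zero _ _ _ _ ZH') as [b1 [Hb1 C1]].
  assert (Ht : content t = content t').
  { pose proof (zh_nonneg _ _ _ _ ZH b1 Hb1). pose proof (zh_nonneg _ _ _ _ ZH' b0 Hb0).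
    rewrite content_shift in *. lia. }
  pose proof (zh_shift _ _ _ _ ZH) as Hp. pose proof (zh_shift _ _ _ _ ZH') as Hp'.
  destruct (half_filling_cover lam F lam_uniq (zh_filling _ _ _ _ ZH) k Hk) as [b [Hb [<-|E]]].
  - rewrite Hp, Hp', !content_shift; auto. lia.
  - replace k with (- F b) by lia. pose proof (hf_entry _ _ (zh_filling _ _ _ _ ZH) b Hb).
    rewrite p_opp, p'_opp, Hp, Hp', !content_shift; auto. lia.
Qed.

End ZeroHalf.

Lemma Rm_half lam m s q F : Rm lam m s q F ->
  half_filling lam F /\ Nat.even (neg_count lam F) = s.
Proof.
  unfold Rm; cbv zeta. intros [[[_ [q_opp _]] Hst] [_ [Hfill Hpar]]].
  apply filling_ofE in Hfill as [t [Himg Hcov]].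
  split.
  - apply (half_filling_of_tableau lam q F t Hst).
    { intros b Hb. destruct (Himg b Hb) as [? [? _]]; auto. }
    intros b0 b1 Hb0 Hb1 E.
    destruct (Himg b0 Hb0) as [E0 [P0 C0]], (Himg b1 Hb1) as [E1 [P1 C1]].
    pose proof (q_opp _ E1) as Hopp. replace (- F b1) with (F b0) in Hopp by lia.
    rewrite P0, P1 in Hopp. lia.
  - rewrite <- Hpar. f_equal. apply neg_count_nneg. intros k Hk _. unfold posb.
    destruct (Z.ltb_spec 0 (content (q k))).
    + apply imageb_iff, Hcov; auto.
    + destruct (imageb lam F k) eqn:E; auto. apply imageb_iff in E as [b [Hb <-]].
      destruct (Himg b Hb) as [_ [Pb Cb]]. rewrite Pb in *. lia.
Qed.

Lemma Rm_nonempty lam m s q F : Rm lam m s q F -> lam <> nil.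
Proof.
  intros [_ [[[k [Hk _]] _] _]] ->. apply entry_iff in Hk. simpl in Hk. lia.
Qed.

(** * Doubling a half filling *)

Definition preimage (lam : list box) (F : box -> Z) (k : Z) : box :=
  match find (fun b => F b =? k) lam with Some b => b | None => (0, 0) end.

(* Every tableau constructed below has this shape: its negative entries fill the
   point reflection of the boxes of the positive ones, which negates contents. *)
Definition double (lam : list box) (F : box -> Z) (t : box) (A : Z) : Tab :=
  fun k => if imageb lam F k then shift (preimage lam F k) t
           else rot A (shift (preimage lam F (- k)) t).

Section Double.
Variables (lam : list box) (F : box -> Z) (t : box) (A : Z).
Hypotheses (lam_uniq : NoDup lam) (HF : half_filling lam F).
Local Notation n := (length lam).
Local Notation q := (double lam F t A).

Lemma preimage_F b : In b lam -> preimage lam F (F b) = b.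
Proof.
  intros Hb. unfold preimage. destruct (find (fun b' => F b' =? F b) lam) as [b'|] eqn:E.
  - apply find_some in E as [Hb' E]. apply Z.eqb_eq in E. apply (hf_inj _ _ HF); auto.
  - apply (find_none _ _ E) in Hb. rewrite Z.eqb_refl in Hb. discriminate.
Qed.

Lemma double_F b : In b lam -> q (F b) = shift b t.
Proof. intros Hb. unfold double. rewrite imageb_F, preimage_F; auto. Qed.

Lemma double_opp_F b : In b lam -> q (- F b) = rot A (shift b t).
Proof.
  intros Hb. unfold double. rewrite imageb_opp_F, Z.opp_involutive, preimage_F; auto.
Qed.

Lemma double_cases k : entry n k -> exists b, In b lam /\
  ((k = F b /\ q k = shift b t) \/ (k = - F b /\ q k = rot A (shift b t))).
Proof.
  intros Hk. destruct (half_filling_cover lam F lam_uniq HF k Hk) as [b [Hb [<-|E]]];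
    exists b; split; auto.
  - left. split; auto. apply double_F; auto.
  - right. replace k with (- F b) by lia. split; auto. apply double_opp_F; auto.
Qed.

Lemma double_opp k : entry n k -> q (- k) = rot A (q k).
Proof.
  intros Hk. destruct (double_cases k Hk) as [b [Hb [[-> E]|[-> E]]]]; rewrite E.
  - apply double_opp_F; auto.
  - rewrite Z.opp_involutive, double_F, rot_involutive; auto.
Qed.

Lemma double_content_opp k : entry n k -> content (q (- k)) = - content (q k).
Proof. intros Hk. rewrite double_opp, content_rot; auto. Qed.

Lemma double_inD c : inD n q c ->
  exists b, In b lam /\ (c = shift b t \/ c = rot A (shift b t)).
Proof.
  intros [k [Hk <-]]. destruct (double_cases k Hk) as [b [Hb [[_ E]|[_ E]]]]; eauto.
Qed.

Lemma inD_double_shift a0 c0 c : skew (fun b => In b lam) -> In a0 lam -> In c0 lam ->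
  box_le (shift a0 t) c -> box_le c (shift c0 t) -> inD n q c.
Proof.
  intros Hsk Ha0 Hc0 [H1 H2] [H3 H4].
  set (b := (fst c - fst t, snd c - snd t)).
  assert (Hb : In b lam) by (apply (Hsk a0 _ c0); auto; unfold b; box_lia).
  exists (F b). split; [apply (hf_entry _ _ HF); auto|].
  rewrite double_F; auto. destruct c. unfold b, shift. simpl. f_equal; lia.
Qed.

Lemma inD_double_rot a0 c0 c : skew (fun b => In b lam) -> In a0 lam -> In c0 lam ->
  box_le (rot A (shift a0 t)) c -> box_le c (rot A (shift c0 t)) -> inD n q c.
Proof.
  intros Hsk Ha0 Hc0 [H1 H2] [H3 H4].
  set (b := (A - fst c - fst t, A - snd c - snd t)).
  assert (Hb : In b lam) by (apply (Hsk c0 _ a0); auto; unfold b; box_lia).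
  exists (- F b). split; [apply entry_opp, (hf_entry _ _ HF); auto|].
  rewrite double_opp_F; auto. destruct c. unfold b, shift, rot. simpl. f_equal; lia.
Qed.

Lemma double_skew : skew (fun b => In b lam) ->
  (forall a0 c0 c, In a0 lam -> In c0 lam ->
     box_le (shift a0 t) c -> box_le c (rot A (shift c0 t)) ->
     exists u, In u lam /\ (box_le c (shift u t) \/ box_le (rot A (shift u t)) c)) ->
  (forall a0 c0 c, In a0 lam -> In c0 lam ->
     box_le (rot A (shift a0 t)) c -> box_le c (shift c0 t) ->
     exists u, In u lam /\ (box_le c (rot A (shift u t)) \/ box_le (shift u t) c)) ->
  skew (inD n q).
Proof.
  intros Hsk HPN HNP a c e Ha He H1 H2.
  assert (Hac : box_le a c /\ box_le c e) by (unfold box_le; lia). destruct Hac as [Hac Hce].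
  destruct (double_inD a Ha) as [a0 [Ha0 [->| ->]]], (double_inD e He) as [e0 [He0 [->| ->]]].
  - apply (inD_double_shift a0 e0); auto.
  - destruct (HPN a0 e0 c) as [u [Hu [Hcu|Huc]]]; auto.
    + apply (inD_double_shift a0 u); auto.
    + apply (inD_double_rot u e0); auto.
  - destruct (HNP a0 e0 c) as [u [Hu [Hcu|Huc]]]; auto.
    + apply (inD_double_rot a0 u); auto.
    + apply (inD_double_shift u e0); auto.
  - apply (inD_double_rot a0 e0); auto.
Qed.

(* A pair of reflected entries needs no condition: the reflection reverses rows
   and columns, so such a pair mirrors a pair of entries of [F]. *)
Lemma double_standard :
  (forall b0 b1, In b0 lam -> In b1 lam -> rowcol_lt (shift b0 t) (shift b1 t) ->
     lval q (F b0) < rval q (F b1)) ->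
  (forall b0 b1, In b0 lam -> In b1 lam -> rowcol_lt (shift b0 t) (rot A (shift b1 t)) ->
     lval q (F b0) < rval q (- F b1)) ->
  (forall b0 b1, In b0 lam -> In b1 lam -> rowcol_lt (rot A (shift b0 t)) (shift b1 t) ->
     lval q (- F b0) < rval q (F b1)) ->
  standard n q.
Proof.
  intros HPP HPN HNP k l Hk Hl Hlt. fold (rowcol_lt (q k) (q l)) in Hlt.
  destruct (double_cases k Hk) as [b0 [Hb0 [[-> E0]|[-> E0]]]],
    (double_cases l Hl) as [b1 [Hb1 [[-> E1]|[-> E1]]]]; rewrite E0, E1 in Hlt; auto.
  rewrite lval_opp, rval_opp. rewrite rowcol_lt_rot in Hlt.
  specialize (HPP b1 b0 Hb1 Hb0 Hlt). lia.
Qed.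

Lemma double_filling (Q : box -> Z -> Prop) :
  (forall b, In b lam -> Q (shift b t) (F b)) ->
  (forall b, In b lam -> ~ Q (rot A (shift b t)) (- F b)) ->
  filling_of lam (fun c e => entry n e /\ q e = c /\ Q c e) F.
Proof.
  intros HQ HnQ. exists t. split.
  - intros c. split.
    + intros [e [He [<- Qe]]]. destruct (double_cases e He) as [b [Hb [[-> E]|[-> E]]]];
        rewrite E in *; [eauto | exfalso; apply (HnQ b); auto].
    + intros [b [Hb ->]]. exists (F b). repeat split; auto using double_F.
      apply (hf_entry _ _ HF); auto.
  - intros b Hb e. split.
    + intros [He [Ee Qe]]. destruct (double_cases e He) as [b' [Hb' [[-> E]|[-> E]]]];
        rewrite E in *.
      * apply shift_inj in Ee. subst. auto.
      * exfalso. apply (HnQ b'); auto. rewrite Ee. auto.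
    + intros ->. repeat split; auto using double_F. apply (hf_entry _ _ HF); auto.
Qed.

Lemma double_pred_image (P : box -> bool) :
  (forall b, In b lam -> P (shift b t) = true) ->
  (forall b, In b lam -> P (rot A (shift b t)) = false) ->
  forall k, entry n k -> P (q k) = imageb lam F k.
Proof.
  intros HP HnP k Hk. destruct (double_cases k Hk) as [b [Hb [[-> E]|[-> E]]]]; rewrite E.
  - rewrite HP, imageb_F; auto.
  - rewrite HnP, imageb_opp_F; auto.
Qed.

Hypothesis halves_disjoint :
  forall b0 b1, In b0 lam -> In b1 lam -> shift b0 t <> rot A (shift b1 t).

Lemma double_inj k l : entry n k -> entry n l -> q k = q l -> k = l.
Proof.
  intros Hk Hl E.
  destruct (double_cases k Hk) as [b0 [Hb0 [[-> E0]|[-> E0]]]],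
    (double_cases l Hl) as [b1 [Hb1 [[-> E1]|[-> E1]]]]; rewrite E0, E1 in E.
  - apply shift_inj in E. subst. auto.
  - exfalso. apply (halves_disjoint b0 b1); auto.
  - exfalso. apply (halves_disjoint b1 b0); auto.
  - apply rot_inj, shift_inj in E. subst. auto.
Qed.

Lemma double_unpaired k : entry n k -> paired q k = false.
Proof.
  intros Hk. destruct (paired q k) eqn:E; auto. apply paired_iff, double_inj in E;
    auto using entry_opp.
  pose proof (entry_neq0 _ _ Hk). lia.
Qed.

Lemma double_unpaired_standard :
  (forall b0 b1, In b0 lam -> In b1 lam -> rowcol_lt (shift b0 t) (rot A (shift b1 t)) ->
     F b0 + F b1 < 0) ->
  (forall b0 b1, In b0 lam -> In b1 lam -> rowcol_lt (rot A (shift b0 t)) (shift b1 t) ->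
     0 < F b0 + F b1) ->
  standard n q.
Proof.
  intros HPN HNP. pose proof (hf_entry _ _ HF) as Hent.
  assert (Hval : forall k, entry n k -> lval q k = k /\ rval q k = k).
  { intros k Hk. unfold lval, rval. rewrite double_unpaired; auto. }
  apply double_standard; intros b0 b1 Hb0 Hb1 Hlt.
  - rewrite (proj1 (Hval _ (Hent b0 Hb0))), (proj2 (Hval _ (Hent b1 Hb1))).
    apply (hf_standard _ _ HF); auto. unfold rowcol_lt, shift in *. simpl in *. lia.
  - rewrite (proj1 (Hval _ (Hent b0 Hb0))), (proj2 (Hval _ (entry_opp _ _ (Hent b1 Hb1)))).
    specialize (HPN b0 b1 Hb0 Hb1 Hlt). lia.
  - rewrite (proj1 (Hval _ (entry_opp _ _ (Hent b0 Hb0)))), (proj2 (Hval _ (Hent b1 Hb1))).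
    specialize (HNP b0 b1 Hb0 Hb1 Hlt). lia.
Qed.

Lemma double_nboxes (P : box -> bool) :
  (forall b, In b lam -> P (shift b t) = true) ->
  (forall b, In b lam -> P (rot A (shift b t)) = false) ->
  nboxes n q P = n /\ nboxes n q (fun c => negb (P c)) = n.
Proof.
  intros HP HnP. rewrite !nboxes_unpaired by apply double_unpaired.
  assert (HPn : length (filter (fun k => P (q k)) (ents n)) = n).
  { rewrite <- (image_length lam F) at 2; auto. f_equal. apply filter_ext_in.
    intros k Hk. apply double_pred_image; auto. }
  split; auto. pose proof (filter_length (fun k => P (q k)) (ents n)). rewrite ents_length in *.
  lia.
Qed.

End Double.

(** * Folding a half filling into T[lam,m,+-] and T[lam,0,+-] *)

Section Corner.
Variables (lam : list box) (F : box -> Z) (bs : box).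
Hypotheses (lam_uniq : NoDup lam) (lam_skew : skew (fun b => In b lam))
  (HF : half_filling lam F) (bs_in : In bs lam)
  (bs_min : forall b, In b lam -> content bs <= content b).
Local Notation n := (length lam).
Local Notation t0 := ((0, - content bs) : box).
Local Notation x := (F bs).

Lemma corner b : In b lam -> fst b <= fst bs /\ snd bs <= snd b.
Proof. apply min_content_corner; auto. Qed.

Lemma corner_center b : In b lam -> content (shift b t0) = 0 -> b = bs.
Proof.
  intros Hb Hc. destruct (corner b Hb). destruct b, bs. simpl in *. f_equal; box_lia.
Qed.

Lemma corner_zero_entries d k : entry n k ->
  content (double lam F t0 d k) = 0 -> k = x \/ k = - x.
Proof.
  intros Hk Hc. destruct (double_cases lam F t0 d lam_uniq HF k Hk) as [b [Hb [[-> E]|[-> E]]]];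
    rewrite E, ?content_rot in Hc; rewrite (corner_center b); auto; lia.
Qed.

(* Reflecting through a point just below the diagonal puts the negative
   entries strictly south-west of the positive ones. *)
Lemma Rm_of_half m s : 1 <= m -> Nat.even (neg_count lam F) = s -> exists q, Rm lam m s q F.
Proof.
  intros Hm Hpar. set (t := (0, m - content bs)). set (A := 2 * fst bs + 1).
  assert (Hq : forall b, In b lam -> fst (shift b t) <= fst bs /\ fst bs + m <= snd (shift b t))
    by (intros b Hb; destruct (corner b Hb); unfold t; box_lia).
  assert (Hdisj : forall b0 b1, In b0 lam -> In b1 lam -> shift b0 t <> rot A (shift b1 t)).
  { intros b0 b1 Hb0 Hb1 E. apply (f_equal fst) in E.
    pose proof (Hq b0 Hb0). pose proof (Hq b1 Hb1). unfold A in *. box_lia. }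
  exists (double lam F t A). unfold Rm; cbv zeta.
  split; [split; [split; [|split]|]|split; [split|split]].
  - intros k l Hk Hl Hkl E. exfalso. apply Hkl, (double_inj lam F t A); auto.
  - apply double_content_opp; auto.
  - apply double_skew; auto; intros a0 c0 c Ha0 Hc0 [H1 H2] [H3 H4]; exfalso;
      pose proof (Hq a0 Ha0); pose proof (Hq c0 Hc0); unfold A in *; box_lia.
  - apply double_unpaired_standard; auto; intros b0 b1 Hb0 Hb1 Hlt; exfalso;
      pose proof (Hq b0 Hb0); pose proof (Hq b1 Hb1); unfold rowcol_lt, A in *; box_lia.
  - exists (F bs). split; [apply (hf_entry _ _ HF); auto|].
    rewrite double_F, content_shift; auto. unfold t, content. simpl. lia.
  - intros k Hk Hc. destruct (double_cases lam F t A lam_uniq HF k Hk) as [b [Hb [[_ E]|[_ E]]]];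
      rewrite E in *; pose proof (Hq b Hb); box_lia.
  - apply double_filling; auto; intros b Hb; pose proof (Hq b Hb); box_lia.
  - rewrite <- Hpar. f_equal. symmetry. apply neg_count_nneg. intros k Hk _.
    symmetry. apply double_pred_image; auto; intros b Hb; pose proof (Hq b Hb);
      unfold posb; [apply Z.ltb_lt | apply Z.ltb_ge]; box_lia.
Qed.

Section Box.
Local Notation q := (double lam F t0 (2 * fst bs)).

Lemma box_double_center_opp : q (- x) = q x.
Proof.
  rewrite double_opp_F, double_F; auto. unfold rot, shift, content. cbn [fst snd]. f_equal; lia.
Qed.

Lemma box_double_center_content : content (q x) = 0.
Proof. rewrite double_F; auto. box_lia. Qed.

Lemma box_double_paired b : In b lam -> paired q (F b) = true <-> b = bs.
Proof.
  intros Hb. rewrite paired_iff, double_opp_F, double_F; auto. destruct (corner b Hb).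
  split; [intros E | intros ->].
  - apply corner_center; auto.
    pose proof (f_equal fst E). pose proof (f_equal snd E). clear E. box_lia.
  - unfold rot, shift, content. cbn [fst snd]. f_equal; lia.
Qed.

Lemma box_double_values b : In b lam -> b <> bs ->
  lval q (F b) = F b /\ rval q (F b) = F b /\ lval q (- F b) = - F b /\ rval q (- F b) = - F b.
Proof.
  intros Hb Hne. unfold lval, rval. rewrite paired_opp.
  destruct (paired q (F b)) eqn:E; [apply box_double_paired in E; auto; congruence|]. auto.
Qed.

Lemma box_double_center :
  lval q x = Z.abs x /\ rval q x = - Z.abs x /\ lval q (- x) = Z.abs x /\ rval q (- x) = - Z.abs x.
Proof.
  unfold lval, rval. rewrite paired_opp.
  replace (paired q x) with true by (symmetry; apply box_double_paired; auto). lia.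
Qed.

Lemma box_double_collision k l : entry n k -> entry n l -> k <> l -> q k = q l ->
  l = - k /\ content (q k) = 0.
Proof.
  intros Hk Hl Hkl E.
  destruct (double_cases lam F t0 (2 * fst bs) lam_uniq HF k Hk) as [b0 [Hb0 [[-> E0]|[-> E0]]]],
    (double_cases lam F t0 (2 * fst bs) lam_uniq HF l Hl) as [b1 [Hb1 [[-> E1]|[-> E1]]]];
    rewrite E0, E1 in E.
  - apply shift_inj in E. congruence.
  - destruct (corner b0 Hb0), (corner b1 Hb1).
    pose proof (f_equal fst E). pose proof (f_equal snd E). clear E.
    rewrite (corner_center b0), (corner_center b1); auto; try box_lia.
    split; auto. apply box_double_center_content.
  - destruct (corner b0 Hb0), (corner b1 Hb1).
    pose proof (f_equal fst E). pose proof (f_equal snd E). clear E.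
    rewrite (corner_center b0), (corner_center b1); auto; try box_lia.
    rewrite box_double_center_opp, box_double_center_content. split; auto. lia.
  - apply rot_inj, shift_inj in E. congruence.
Qed.

Lemma box_double_skew : skew (inD n q).
Proof.
  apply double_skew; auto; intros a0 c0 c Ha0 Hc0 H1 H2; exists bs; split; auto;
    destruct (corner a0 Ha0), (corner c0 Hc0), (corner bs bs_in); unfold box_le in *.
  - destruct (Z_le_dec (fst c) (fst bs)); [left|right]; box_lia.
  - destruct (Z_le_dec (snd c) (fst bs)); [left|right]; box_lia.
Qed.

(* Only [|x|] counts among the two entries [+-x] of the central box. *)
Lemma box_double_one_zero_box : nboxes n q zerob = 1%nat.
Proof.
  change (length (filter (counted_zero q) (ents n)) = 1%nat).
  assert (Hax : entry n (Z.abs x)).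
  { destruct (Z.abs_eq_or_opp x) as [-> | ->]; [|apply entry_opp]; apply (hf_entry _ _ HF); auto. }
  pose proof (entry_neq0 _ _ (hf_entry _ _ HF bs bs_in)).
  apply (length_filter_one _ (ents_NoDup n) _ (Z.abs x) Hax). intros k Hk.
  assert (Hzero : content (q k) = 0 <-> k = x \/ k = - x).
  { split; [apply corner_zero_entries; auto|].
    intros [-> | ->]; rewrite ?box_double_center_opp; apply box_double_center_content. }
  assert (Hpaired : content (q k) = 0 -> paired q k = true).
  { intros Hz. apply paired_iff. pose proof box_double_center_opp.
    destruct (proj1 Hzero Hz) as [-> | ->]; rewrite ?Z.opp_involutive; congruence. }
  unfold counted_zero, zerob. rewrite andb_true_iff, Z.eqb_eq. split.
  - intros [Hz Hk0]. rewrite Hpaired in Hk0 by auto. simpl in Hk0. apply Z.ltb_lt in Hk0.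
    destruct (proj1 Hzero Hz); lia.
  - intros ->. assert (Hz : content (q (Z.abs x)) = 0) by (apply Hzero; lia).
    split; auto. rewrite Hpaired by auto. simpl. apply Z.ltb_lt. lia.
Qed.

Lemma box_double_posb k : entry n k -> k <> x -> posb (q k) = imageb lam F k.
Proof.
  intros Hk Hkx. unfold posb.
  destruct (double_cases lam F t0 (2 * fst bs) lam_uniq HF k Hk) as [b [Hb [[-> E]|[-> E]]]];
    rewrite E; destruct (corner b Hb).
  - rewrite imageb_F by auto. apply Z.ltb_lt. enough (content (shift b t0) <> 0) by box_lia.
    intros C. apply Hkx. rewrite (corner_center b); auto.
  - rewrite imageb_opp_F by auto. apply Z.ltb_ge. box_lia.
Qed.

Lemma box_double_parity s : Nat.even (neg_count lam F) = s ->
  Nat.even (nneg n q posb) = s <-> 0 < x.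
Proof.
  intros Hpar. pose proof (entry_neq0 _ _ (hf_entry _ _ HF bs bs_in)).
  destruct (Z_lt_le_dec 0 x) as [Hx0|Hx0].
  - split; auto. intros _. rewrite <- Hpar. f_equal. symmetry. apply neg_count_nneg.
    intros k Hk Hk0. symmetry. apply box_double_posb; auto. lia.
  - split; [|lia]. intros Hev.
    rewrite (neg_count_nneg_except lam F q posb x), imageb_F, Nat.even_add, Hev in Hpar; auto.
    + destruct s; discriminate.
    + apply (hf_entry _ _ HF); auto.
    + lia.
    + unfold posb. rewrite box_double_center_content. auto.
    + intros k Hk _ Hkx. symmetry. apply box_double_posb; auto.
Qed.

Hypothesis row_gt : forall b, In b lam -> fst b = fst bs -> b <> bs -> Z.abs x < F b.
Hypothesis col_lt : forall b, In b lam -> snd b = snd bs -> b <> bs -> F b < - Z.abs x.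

(* Apart from the pair [+-x] in the central box, the values compared across
   the centre come from the row and the column of the central box. *)
Lemma box_double_standard : standard n q.
Proof.
  pose proof box_double_center as [Cl [Cr [Cl' Cr']]].
  apply double_standard; auto; intros b0 b1 Hb0 Hb1 Hlt;
    destruct (corner b0 Hb0), (corner b1 Hb1); unfold rowcol_lt in Hlt;
    destruct (box_eq_dec b0 bs) as [->|N0], (box_eq_dec b1 bs) as [->|N1];
    try (destruct (box_double_values b0 Hb0 N0) as [L0 [R0 [L0' R0']]]);
    try (destruct (box_double_values b1 Hb1 N1) as [L1 [R1 [L1' R1']]]);
    try (pose proof (box_neq _ _ N0)); try (pose proof (box_neq _ _ N1)).
  - exfalso. box_lia.
  - rewrite Cl, R1. apply row_gt; auto. box_lia.
  - rewrite Cr, L0. apply col_lt; auto. box_lia.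
  - rewrite L0, R1. apply (hf_standard _ _ HF); auto. unfold rowcol_lt. box_lia.
  - exfalso. box_lia.
  - rewrite Cl, R1'. enough (F b1 < - Z.abs x) by lia. apply col_lt; auto. box_lia.
  - rewrite Cr', L0. apply col_lt; auto. box_lia.
  - rewrite L0, R1'. enough (F b0 < - Z.abs x /\ F b1 < - Z.abs x) by lia.
    split; apply col_lt; auto; box_lia.
  - exfalso. box_lia.
  - rewrite Cl', R1. apply row_gt; auto. box_lia.
  - rewrite Cr, L0'. enough (Z.abs x < F b0) by lia. apply row_gt; auto. box_lia.
  - rewrite L0', R1. enough (Z.abs x < F b0 /\ Z.abs x < F b1) by lia.
    split; apply row_gt; auto; box_lia.
Qed.

Lemma Rbox_double s : Nat.even (neg_count lam F) = s -> Rbox lam s q F.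
Proof.
  intros Hpar. pose proof (entry_neq0 _ _ (hf_entry _ _ HF bs bs_in)).
  unfold Rbox; cbv zeta. split; [split; [split; [|split]|]|split].
  - apply box_double_collision.
  - apply double_content_opp; auto.
  - apply box_double_skew.
  - apply box_double_standard.
  - apply box_double_one_zero_box.
  - apply double_filling; auto; intros b Hb; destruct (corner b Hb).
    + split; [box_lia|]. intros Hz. rewrite (corner_center b), box_double_parity; auto. tauto.
    + rewrite content_rot. intros [Hnn Hz]. assert (b = bs) by (apply corner_center; auto; box_lia).
      subst b. specialize (Hz ltac:(box_lia)). rewrite box_double_parity in Hz by auto.
      destruct (Z_lt_le_dec 0 x) as [Hgt|Hle].
      * pose proof (proj2 Hz Hgt). lia.
      * assert (Hmx : 0 < - x) by lia. pose proof (proj1 Hz Hmx). lia.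
Qed.

End Box.

Lemma Rsplit_double (horiz : bool) (c0 : Z) (side : bool) (A : Z) (s : bool) :
  let P := fun c : box => Bool.eqb (if horiz then fst c <=? c0 else snd c <=? c0) side in
  (forall b, In b lam -> P (shift b t0) = true) ->
  (forall b, In b lam -> P (rot A (shift b t0)) = false) ->
  skew (inD n (double lam F t0 A)) -> standard n (double lam F t0 A) ->
  Nat.even (neg_count lam F) = s -> Rsplit horiz lam s (double lam F t0 A) F.
Proof.
  intros P HP HnP Hsk Hst Hpar. set (q := double lam F t0 A).
  assert (Hdisj : forall b0 b1, In b0 lam -> In b1 lam -> shift b0 t0 <> rot A (shift b1 t0)).
  { intros b0 b1 Hb0 Hb1 E. pose proof (HP b0 Hb0) as H0. rewrite E, HnP in H0 by auto.
    discriminate. }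
  assert (Hside : forall k, entry n k ->
    (P (q k) = true /\ 0 <= content (q k)) \/ (P (q k) = false /\ content (q k) <= 0)).
  { intros k Hk. destruct (double_cases lam F t0 A lam_uniq HF k Hk) as [b [Hb [[_ E]|[_ E]]]];
      unfold q; rewrite E; destruct (corner b Hb); [left; rewrite HP | right; rewrite HnP];
      auto; rewrite ?content_rot; box_lia. }
  pose proof (entry_neq0 _ _ (hf_entry _ _ HF bs bs_in)) as Hx.
  destruct (double_nboxes lam F t0 A lam_uniq HF Hdisj P HP HnP) as [HPn HnPn].
  unfold Rsplit; cbv zeta. split; [split; [split; [|split]|]|split].
  - intros k l Hk Hl Hkl E. exfalso. apply Hkl, (double_inj lam F t0 A); auto.
  - apply double_content_opp; auto.
  - exact Hsk.
  - exact Hst.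
  - rewrite nboxes_unpaired by (apply double_unpaired; auto).
    apply (length_filter_two _ (ents_NoDup n) _ x (- x)); try lia.
    + apply hf_entry; auto.
    + apply entry_opp, hf_entry; auto.
    + intros k Hk. unfold zerob. rewrite Z.eqb_eq. split; [apply corner_zero_entries; auto|].
      intros [-> | ->]; unfold q; rewrite ?double_opp_F, ?double_F, ?content_rot; auto;
        apply (f_equal Z.opp) || idtac; box_lia.
  - exists c0, side. fold P. repeat split; auto.
    + intros k Hk HPk. change (P (q k) = true) in HPk.
      destruct (Hside k Hk) as [[_ ?]|[? _]]; [lia | congruence].
    + intros k Hk HPk. change (P (q k) = false) in HPk.
      destruct (Hside k Hk) as [[? _]|[_ ?]]; [congruence | lia].
    + apply double_filling; auto. intros b Hb HPb. change (P (rot A (shift b t0)) = true) in HPb.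
      rewrite HnP in HPb by auto. discriminate.
    + rewrite <- Hpar. f_equal. symmetry. apply neg_count_nneg. intros k Hk _.
      symmetry. apply double_pred_image; auto.
Qed.

Section HorizontalSplit.
Local Notation br := ((fst bs, snd bs + 1) : box).
Hypothesis br_in : In br lam.
Hypothesis br_neg : x + F br < 0.

Lemma Rdiv_double s : Nat.even (neg_count lam F) = s ->
  Rsplit true lam s (double lam F t0 (2 * fst bs + 1)) F.
Proof.
  intros Hpar. apply (Rsplit_double true (fst bs) true); auto.
  - intros b Hb. destruct (corner b Hb). rewrite (proj2 (Z.leb_le _ _)) by box_lia. auto.
  - intros b Hb. destruct (corner b Hb). rewrite (proj2 (Z.leb_gt _ _)) by box_lia. auto.
  - apply double_skew; auto; intros a0 c0 c Ha0 Hc0 H1 H2;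
      destruct (corner a0 Ha0), (corner c0 Hc0); unfold box_le in *; [|exfalso; box_lia].
    exists br. split; auto. destruct (Z_le_dec (fst c) (fst bs)); [left|right]; box_lia.
  - apply double_unpaired_standard; auto.
    + intros b0 b1 Hb0 Hb1 E. apply (f_equal fst) in E.
      destruct (corner b0 Hb0), (corner b1 Hb1). box_lia.
    + intros b0 b1 Hb0 Hb1 Hlt. destruct (corner b0 Hb0), (corner b1 Hb1).
      unfold rowcol_lt in Hlt. assert (Hcol : snd b0 = snd bs /\ snd b1 = snd bs + 1 \/
        snd b0 = snd bs + 1 /\ snd b1 = snd bs) by box_lia.
      assert (fst b0 <= fst bs /\ fst b1 <= fst bs) as [] by box_lia.
      destruct Hcol as [[]|[]].
      * assert (F b0 <= x) by (apply (half_filling_col_le lam F HF); auto).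
        assert (F b1 <= F br) by (apply (half_filling_col_le lam F HF); simpl; auto).
        lia.
      * assert (F b0 <= F br) by (apply (half_filling_col_le lam F HF); simpl; auto).
        assert (F b1 <= x) by (apply (half_filling_col_le lam F HF); auto).
        lia.
    + intros b0 b1 Hb0 Hb1 Hlt. exfalso. destruct (corner b0 Hb0), (corner b1 Hb1).
      unfold rowcol_lt in Hlt. box_lia.
Qed.

End HorizontalSplit.

Section VerticalSplit.
Local Notation ba := ((fst bs - 1, snd bs) : box).
Hypothesis ba_in : In ba lam.
Hypothesis ba_pos : 0 < x + F ba.

Lemma Rvert_double s : Nat.even (neg_count lam F) = s ->
  Rsplit false lam s (double lam F t0 (2 * fst bs - 1)) F.
Proof.
  intros Hpar. apply (Rsplit_double false (fst bs - 1) false); auto.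
  - intros b Hb. destruct (corner b Hb). rewrite (proj2 (Z.leb_gt _ _)) by box_lia. auto.
  - intros b Hb. destruct (corner b Hb). rewrite (proj2 (Z.leb_le _ _)) by box_lia. auto.
  - apply double_skew; auto; intros a0 c0 c Ha0 Hc0 H1 H2;
      destruct (corner a0 Ha0), (corner c0 Hc0); unfold box_le in *; [exfalso; box_lia|].
    exists ba. split; auto. destruct (Z_le_dec (snd c) (fst bs - 1)); [left|right]; box_lia.
  - apply double_unpaired_standard; auto.
    + intros b0 b1 Hb0 Hb1 E. apply (f_equal snd) in E.
      destruct (corner b0 Hb0), (corner b1 Hb1). box_lia.
    + intros b0 b1 Hb0 Hb1 Hlt. exfalso. destruct (corner b0 Hb0), (corner b1 Hb1).
      unfold rowcol_lt in Hlt. box_lia.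
    + intros b0 b1 Hb0 Hb1 Hlt. destruct (corner b0 Hb0), (corner b1 Hb1).
      unfold rowcol_lt in Hlt. assert (Hrow : fst b0 = fst bs /\ fst b1 = fst bs - 1 \/
        fst b0 = fst bs - 1 /\ fst b1 = fst bs) by box_lia.
      destruct Hrow as [[]|[]].
      * assert (x <= F b0) by (apply (half_filling_row_le lam F HF); auto).
        assert (F ba <= F b1) by (apply (half_filling_row_le lam F HF); simpl; auto).
        lia.
      * assert (F ba <= F b0) by (apply (half_filling_row_le lam F HF); simpl; auto).
        assert (x <= F b1) by (apply (half_filling_row_le lam F HF); auto).
        lia.
Qed.

End VerticalSplit.

Lemma R0_of_half s : Nat.even (neg_count lam F) = s -> exists p, R0 lam s p F.
Proof.
  intros Hpar. set (br := (fst bs, snd bs + 1)). set (ba := (fst bs - 1, snd bs)).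
  pose proof (hf_standard _ _ HF) as Hst.
  assert (Hne : forall b, In b lam -> b <> bs -> F b <> Z.abs x /\ F b <> - Z.abs x).
  { intros b Hb Hb'. assert (F b <> x) by (intros E; apply Hb', (hf_inj _ _ HF); auto).
    pose proof (hf_opp _ _ HF b bs Hb bs_in). destruct (Z.abs_eq_or_opp x) as [Ex|Ex]; lia. }
  assert (Hright : (In br lam -> Z.abs x <= F br) ->
            forall b, In b lam -> fst b = fst bs -> b <> bs -> Z.abs x < F b).
  { intros Hle b Hb Hrow Hb'. destruct (corner b Hb). pose proof (box_neq _ _ Hb').
    assert (br_in : In br lam) by (apply (lam_skew bs _ b); auto; unfold br; simpl; lia).
    assert (F br <= F b) by (apply (half_filling_row_le lam F HF); unfold br; simpl; auto; lia).
    assert (br <> bs) by (unfold br; intros E; apply (f_equal snd) in E; simpl in E; lia).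
    specialize (Hle br_in). destruct (Hne br br_in); auto. lia. }
  assert (Habove : (In ba lam -> F ba <= - Z.abs x) ->
            forall b, In b lam -> snd b = snd bs -> b <> bs -> F b < - Z.abs x).
  { intros Hle b Hb Hcol Hb'. destruct (corner b Hb). pose proof (box_neq _ _ Hb').
    assert (ba_in : In ba lam) by (apply (lam_skew b _ bs); auto; unfold ba; simpl; lia).
    assert (F b <= F ba) by (apply (half_filling_col_le lam F HF); unfold ba; simpl; auto; lia).
    assert (ba <> bs) by (unfold ba; intros E; apply (f_equal fst) in E; simpl in E; lia).
    specialize (Hle ba_in). destruct (Hne ba ba_in); auto. lia. }
  assert (Hbr : In br lam -> x < F br)
    by (intros; apply Hst; auto; unfold br, rowcol_lt; simpl; lia).
  assert (Hba : In ba lam -> F ba < x)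
    by (intros; apply Hst; auto; unfold ba, rowcol_lt; simpl; lia).
  destruct (in_dec box_eq_dec br lam) as [br_in|br_out];
    [destruct (Z_lt_le_dec (F br) (Z.abs x)) as [Hdiv|Hbr_ge]|].
  { exists (double lam F t0 (2 * fst bs + 1)). right; left. apply Rdiv_double; auto.
    specialize (Hbr br_in). unfold br in *. lia. }
  all: destruct (in_dec box_eq_dec ba lam) as [ba_in|ba_out];
    [destruct (Z_lt_le_dec (- Z.abs x) (F ba)) as [Hvert|Hba_le]|].
  all: try (exists (double lam F t0 (2 * fst bs - 1)); right; right; apply Rvert_double; auto;
    specialize (Hba ba_in); unfold ba in *; lia).
  all: exists (double lam F t0 (2 * fst bs)); left;
    apply Rbox_double; [apply Hright; tauto | apply Habove; tauto | exact Hpar].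
Qed.

End Corner.

Theorem theorem4p9 (lam : list box) (m : Z) :
  NoDup lam -> skew (fun b => In b lam) -> 1 <= m ->
  forall s : bool,
    (* the nonnegative half of X is a well-defined filling of lam *)
    (forall p F F', R0 lam s p F -> R0 lam s p F' ->
       forall b, In b lam -> F b = F' b) /\
    (* X is sent to a Y in T[lam,m,s] with the same filling of lam *)
    (forall p F, R0 lam s p F -> exists q, Rm lam m s q F) /\
    (* injectivity *)
    (forall p p' F, R0 lam s p F -> R0 lam s p' F ->
       same_tableau (length lam) p p') /\
    (* surjectivity *)
    (forall q F, Rm lam m s q F -> exists p, R0 lam s p F).
Proof.
  intros lam_uniq lam_skew Hm s. split; [|split; [|split]].
  - intros p F F' HR HR'.
    destruct (R0_zero_half _ _ _ _ lam_uniq HR) as [[_ [p_opp _]] [Hpar [t ZH]]].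
    destruct (R0_zero_half _ _ _ _ lam_uniq HR') as [_ [Hpar' [t' ZH']]].
    apply (zero_half_unique lam p lam_uniq p_opp F F' t t'); congruence.
  - intros p F HR. destruct (exists_min_content lam (R0_nonempty _ _ _ _ lam_uniq HR))
      as [bs [Hbs Hmin]].
    destruct (R0_zero_half _ _ _ _ lam_uniq HR) as [_ [Hpar [t ZH]]].
    apply (Rm_of_half lam F bs); auto. exact (zh_filling _ _ _ _ ZH).
  - intros p p' F HR HR'.
    destruct (R0_zero_half _ _ _ _ lam_uniq HR) as [[_ [p_opp _]] [_ [t ZH]]].
    destruct (R0_zero_half _ _ _ _ lam_uniq HR') as [[_ [p'_opp _]] [_ [t' ZH']]].
    exact (zero_half_same_tableau lam p lam_uniq p_opp p' F t t' p'_opp ZH ZH').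
  - intros q F HRm. destruct (exists_min_content lam (Rm_nonempty _ _ _ _ _ HRm))
      as [bs [Hbs Hmin]].
    destruct (Rm_half _ _ _ _ _ HRm) as [HF Hpar].
    apply (R0_of_half lam F bs); auto.
Qed.
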